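(* Let $X, Y, Z$ be Polish spaces and let $P: X \rightsquigarrow Y$ be a tight Feller kernel such that each $P(x,\cdot)$ has a continuous density $\rho_x$ with respect to a fixed reference Borel measure on $Y$. Let $R \subseteq X \times Z$ and $S \subseteq Y \times Z$ be closed, and define $P^{\dagger,\delta} S = \{(x,z) \in X \times Z : \mathrm{supp}_\delta(P(x)) \subseteq S_z\}$. If $0 < \delta \le \epsilon < 1$, then $$P_!^\epsilon(R \cap P^{\dagger,\delta} S) \subseteq P_!^\epsilon R \cap S.$$
   Context: Feller: $x \mapsto \int\phi\,dP(x,\cdot)$ continuous for bounded continuous $\phi$; tight: for each compact $K \subseteq X$, $\eta>0$ there is compact $L$ with $P(x,L) \ge 1-\eta$ for $x \in K$. $S_z = \{y : (y,z) \in S\}$. The $\epsilon$-highest density region is $\mathrm{supp}_\epsilon(P(x)) = \{y : \rho_x(y) \ge \lambda_\epsilon\}$ with $\lambda_\epsilon = \sup\{\lambda \ge 0 : P(x, \{y : \rho_x(y) \ge \lambda\}) \ge 1-\epsilon\}$. The $\epsilon$-pushforward is $P_!^\epsilon T = \overline{\bigcup_{(x,z) \in T} \mathrm{supp}_\epsilon(P(x)) \times \{z\}}$ (closure in $Y \times Z$). *)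

From HB Require Import structures.
From mathcomp Require Import all_boot all_order all_algebra.
From mathcomp Require Import all_classical all_reals all_analysis measurable_realfun.
Set Implicit Arguments. Unset Strict Implicit. Unset Printing Implicit Defensive.
Import Order.TTheory GRing.Theory Num.Theory.
Import numFieldNormedType.Exports.
Local Open Scope classical_set_scope.
Local Open Scope ring_scope.

Definition separable_space (T : topologicalType) : Prop :=
  exists D : set T, countable D /\ closure D = setT.

Definition completely_metrizable (R : realType) (T : topologicalType) : Prop :=
  exists d : T -> T -> R,
    (forall x y, 0 <= d x y) /\
    (forall x y, d x y = 0 <-> x = y) /\
    (forall x y, d x y = d y x) /\
    (forall x y z, d x z <= d x y + d y z) /\
    (forall A : set T, open A <->
       (forall x, A x -> exists e, 0 < e /\ forall y, d x y < e -> A y)) /\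
    (forall u : nat -> T,
       (forall e, 0 < e -> exists N, forall m n,
           (N <= m)%N -> (N <= n)%N -> d (u m) (u n) < e) ->
       exists l, forall e, 0 < e -> exists N, forall n,
           (N <= n)%N -> d (u n) l < e).

Definition polish (R : realType) (T : topologicalType) : Prop :=
  separable_space T /\ completely_metrizable R T.

Definition borel (Y : ptopologicalType) := g_sigma_algebraType (@open Y).

Section Kernels.
Variables (R : realType) (X : topologicalType) (Y : ptopologicalType).

Definition markov_kernel (P : X -> {measure set (borel Y) -> \bar R}) : Prop :=
  (forall x, P x setT = 1%E) /\
  (forall A : set (borel Y), measurable A ->
     forall B : set (\bar R), measurable B ->
       <<s @open X >> ((fun x => P x A) @^-1` B)).

Definition feller (P : X -> {measure set (borel Y) -> \bar R}) : Prop :=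
  forall phi : Y -> R, continuous phi -> (exists M, forall y, `|phi y| <= M) ->
    continuous (fun x => Rintegral (P x) setT (phi : borel Y -> R)).

Definition tight_kernel (P : X -> {measure set (borel Y) -> \bar R}) : Prop :=
  forall K : set X, compact K -> forall eta : R, 0 < eta ->
    exists L : set Y, compact L /\
      forall x, K x -> ((1 - eta)%:E <= P x (L : set (borel Y)))%E.

Definition continuous_density (mu : {measure set (borel Y) -> \bar R})
    (P : X -> {measure set (borel Y) -> \bar R}) (rho : X -> Y -> R) : Prop :=
  forall x, (forall y, 0 <= rho x y) /\ continuous (rho x) /\
    forall A : set (borel Y), measurable A ->
      P x A = (\int[mu]_(y in A) (rho x y)%:E)%E.

End Kernels.

Section HDR.
Variables (R : realType) (X Z : topologicalType) (Y : ptopologicalType).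
Variables (P : X -> {measure set (borel Y) -> \bar R}) (rho : X -> Y -> R).

Definition hdr_level (eps : R) (x : X) : R :=
  sup [set l : R | 0 <= l /\
         ((1 - eps)%:E <= P x ([set y | (l <= rho x y)%R] : set (borel Y)))%E].

Definition hdr_supp (eps : R) (x : X) : set Y :=
  [set y | hdr_level eps x <= rho x y].

Definition eps_pushforward (eps : R) (T : set (X * Z)) : set (Y * Z) :=
  closure [set yz | exists x, T (x, yz.2) /\ hdr_supp eps x yz.1].

Definition p_dagger (delta : R) (S : set (Y * Z)) : set (X * Z) :=
  [set xz | hdr_supp delta xz.1 `<=` [set y | S (y, xz.2)]].

End HDR.

(* The sets [supp_eps (P x)] shrink as [eps] grows: a larger [eps] lowers the
   mass [1 - eps] that the superlevel set [{rho_x >= l}] must carry, so more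
   levels [l] qualify and their supremum [lambda_eps] increases.  The only
   analytic input is that these supremums exist, i.e. that the qualifying levels
   are bounded, which follows from continuity from above of the finite measure
   [P x] along [{rho_x >= n}], whose intersection is empty.  Hence
   [supp_eps (P x) ⊆ supp_delta (P x) ⊆ S_z] for [(x, z)] in [P^{†,δ} S], so
   every generator of [P_!^eps (R ∩ P^{†,δ} S)] lies in the closed set [S];
   monotonicity of [P_!^eps] gives the other inclusion. *)
From HB Require Import structures.
From mathcomp Require Import all_boot all_order all_algebra.
From mathcomp Require Import all_classical all_reals all_analysis measurable_realfun.
Set Implicit Arguments. Unset Strict Implicit. Unset Printing Implicit Defensive.
Import Order.TTheory GRing.Theory Num.Theory.
Import numFieldNormedType.Exports.
Local Open Scope classical_set_scope.
Local Open Scope ring_scope.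

Lemma closed_measurable_borel (Y : ptopologicalType) (C : set Y) :
  closed C -> measurable (C : set (borel Y)).
Proof.
move=> cC; rewrite -(setCK C); apply: measurableC.
by apply: sub_gen_smallest; rewrite openC.
Qed.

Lemma continuous_measurable_ge (R : realType) (Y : ptopologicalType)
    (f : Y -> R) (l : R) :
  continuous f -> measurable ([set y | l <= f y] : set (borel Y)).
Proof.
move=> cf; apply: closed_measurable_borel.
exact: (continuous_closedP f).1 cf _ (@closed_ge R l).
Qed.

Lemma finite_measure_superlevel_bounded (R : realType) (Y : ptopologicalType)
    (m : {measure set (borel Y) -> \bar R}) (f : Y -> R) (c : R) :
  (m setT < +oo)%E -> continuous f -> 0 < c ->
  exists M : R, forall l,
    (c%:E <= m ([set y | (l <= f y)%R] : set (borel Y)))%E -> l <= M.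
Proof.
move=> mT cf c0.
pose F n : set (borel Y) := [set y | n%:R <= f y].
have mF n : measurable (F n) by exact: continuous_measurable_ge.
have F_decr : {homo F : n k / (n <= k)%N >-> (k <= n)%O}.
  move=> n k nk; apply/subsetPset => y /=.
  by apply: le_trans; rewrite ler_nat.
have F_cap : \bigcap_n F n = set0.
  apply/seteqP; split => // y /= Fy.
  have fy_lt := le_lt_trans (ler_norm (f y)) (archi_boundP (normr_ge0 (f y))).
  by have := lt_le_trans fy_lt (Fy _ I); rewrite ltxx.
have mF0 : (m (F 0%N) < +oo)%E.
  by apply: le_lt_trans mT; apply: le_measure; rewrite ?inE.
have := nonincreasing_cvg_mu mF0 mF (bigcapT_measurable mF) F_decr.
rewrite F_cap measure0 => /(_ _ (@nbhs_open_ereal_lt R 0 (fun=> c) c0)) [N _ mFN].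
have {mFN} mFN_lt : (m (F N) < c%:E)%E := mFN N (leqnn N).
exists N%:R => l cl; rewrite leNgt; apply/negP => Nl.
have : (m [set y | (l <= f y)%R] <= m (F N))%E.
  apply: le_measure; rewrite ?inE //; first exact: continuous_measurable_ge.
  by move=> y /= /(le_trans (ltW Nl)).
by move=> /(le_trans cl) /(lt_le_trans mFN_lt); rewrite ltxx.
Qed.

Section HighestDensityRegions.
Variables (R : realType) (X : topologicalType) (Y : ptopologicalType).
Variables (P : X -> {measure set (borel Y) -> \bar R}) (rho : X -> Y -> R).

Definition hdr_levels (eps : R) (x : X) : set R :=
  [set l : R | 0 <= l /\
         ((1 - eps)%:E <= P x ([set y | (l <= rho x y)%R] : set (borel Y)))%E].

Lemma hdr_levelE (eps : R) (x : X) :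
  hdr_level P rho eps x = sup (hdr_levels eps x).
Proof. by []. Qed.

Variable x : X.
Hypotheses (Px1 : P x setT = 1%E) (rho_ge0 : forall y, 0 <= rho x y)
  (rho_cont : continuous (rho x)).

Lemma hdr_levels_has_sup (eps : R) :
  0 <= eps -> eps < 1 -> has_sup (hdr_levels eps x).
Proof.
move=> eps0 eps1; split.
  exists 0; split => //; rewrite (_ : [set y | _] = setT).
    by rewrite Px1 lee_fin lerBlDr lerDl.
  by apply/seteqP; split => // y _; exact: rho_ge0.
have Px_fin : (P x setT < +oo)%E by rewrite Px1 ltry.
have mass_gt0 : 0 < 1 - eps by rewrite subr_gt0.
have [M ubM] := finite_measure_superlevel_bounded Px_fin rho_cont mass_gt0.
by exists M => l [_]; exact: ubM.
Qed.

Lemma hdr_level_le (delta eps : R) :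
  0 <= delta -> delta <= eps -> eps < 1 ->
  hdr_level P rho delta x <= hdr_level P rho eps x.
Proof.
move=> delta0 de eps1; rewrite !hdr_levelE; apply: sup_le.
- move=> l [l0 Pl]; apply: le_down; split => //; apply: le_trans Pl.
  by rewrite lee_fin lerD2l lerN2.
- exact: (hdr_levels_has_sup delta0 (le_lt_trans de eps1)).1.
- exact: hdr_levels_has_sup (le_trans delta0 de) eps1.
Qed.

Lemma hdr_supp_subset (delta eps : R) :
  0 <= delta -> delta <= eps -> eps < 1 ->
  hdr_supp P rho eps x `<=` hdr_supp P rho delta x.
Proof. by move=> delta0 de eps1 y; apply: le_trans (hdr_level_le _ _ _). Qed.

End HighestDensityRegions.

Section Pushforward.
Variables (R : realType) (X Z : topologicalType) (Y : ptopologicalType).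
Variables (P : X -> {measure set (borel Y) -> \bar R}) (rho : X -> Y -> R).

Lemma eps_pushforward_subset (eps : R) (T T' : set (X * Z)) :
  T `<=` T' -> eps_pushforward P rho eps T `<=` eps_pushforward P rho eps T'.
Proof.
move=> TT'; apply: closureS => -[y z] /= [x [Txz supp_y]].
by exists x; split => //; exact: TT'.
Qed.

Lemma eps_pushforward_p_dagger (delta eps : R) (S : set (Y * Z)) :
  closed S -> (forall x, hdr_supp P rho eps x `<=` hdr_supp P rho delta x) ->
  eps_pushforward P rho eps (p_dagger P rho delta S) `<=` S.
Proof.
move=> cS supp_sub; rewrite [W in _ `<=` W]((closure_id S).1 cS).
apply: closureS => -[y z] /= [x [dagger_xz supp_y]].
exact/dagger_xz/supp_sub.
Qed.

End Pushforward.

Theorem mainTheorem17 (R : realType) (X Z : topologicalType) (Y : ptopologicalType)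
  (mu : {measure set (borel Y) -> \bar R})
  (P : X -> {measure set (borel Y) -> \bar R}) (rho : X -> Y -> R)
  (RR : set (X * Z)) (S : set (Y * Z)) (delta eps : R) :
  polish R X -> polish R Y -> polish R Z ->
  markov_kernel P -> tight_kernel P -> feller P ->
  continuous_density mu P rho ->
  closed RR -> closed S ->
  0 < delta -> delta <= eps -> eps < 1 ->
  eps_pushforward P rho eps (RR `&` p_dagger P rho delta S)
    `<=` eps_pushforward P rho eps RR `&` S.
Proof.
move=> _ _ _ [P1 _] _ _ dens _ cS delta0 de eps1.
have supp_sub x : hdr_supp P rho eps x `<=` hdr_supp P rho delta x.
  have [rho_ge0 [rho_cont _]] := dens x.
  exact: (hdr_supp_subset (P1 x) rho_ge0 rho_cont (ltW delta0) de eps1).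
rewrite subsetI; split.
  by apply: eps_pushforward_subset; exact: subIsetl.
apply: subset_trans (eps_pushforward_p_dagger cS supp_sub).
by apply: eps_pushforward_subset; exact: subIsetr.
Qed.
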